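(* Let $n\ge 1$ and let $\mathcal F,\mathcal G\subset 2^{[n]}$ be down-sets with $|\mathcal F|\le|\mathcal G|$. Then there is a matching in the bipartite Kneser graph $KG(\mathcal F,\mathcal G)$ that covers every vertex of $\mathcal F$; equivalently, there is an injective map $\phi:\mathcal F\to\mathcal G$ such that $A\cap\phi(A)=\emptyset$ for every $A\in\mathcal F$.
   Context: $[n]=\{1,\dots,n\}$ and $2^{[n]}$ is its power set. A family $\mathcal B\subset 2^{[n]}$ is a down-set if $B\in\mathcal B$ and $A\subset B$ imply $A\in\mathcal B$. For families $\mathcal F,\mathcal G$, the bipartite Kneser graph $KG(\mathcal F,\mathcal G)$ has partite sets $\mathcal F$ and $\mathcal G$ (taken as disjoint copies) and edge set $\{(F,G):F\in\mathcal F,\ G\in\mathcal G,\ F\cap G=\emptyset\}$. *)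

From mathcomp Require Import all_boot.
Set Implicit Arguments. Unset Strict Implicit. Unset Printing Implicit Defensive.

Definition down_set (n : nat) (B : {set {set 'I_n}}) : Prop :=
  forall A C : {set 'I_n}, C \in B -> A \subset C -> A \in B.

From mathcomp Require Import all_boot zify.
Set Implicit Arguments. Unset Strict Implicit. Unset Printing Implicit Defensive.

(* By Hall's theorem it suffices that every [S \subset F] has at least [#|S|]
   neighbours, i.e. [#|S| <= #|G :&: D|] where [D] is the down-set of sets
   disjoint from some member of [S].  Complementation maps [D] onto the
   up-closure [U] of [S], so [#|D| = #|U|], and the Harris-Kleitman inequality
   (a down-set and an up-set are negatively correlated, two down-sets
   positively) gives
   [#|S| 2^n <= #|F :&: U| 2^n <= #|F| #|U| <= #|G| #|D| <= #|G :&: D| 2^n]. *)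

Section Hall.
Variables (A B : finType) (r : A -> B -> bool).
Implicit Types (F S : {set A}) (G : {set B}).

Definition nbh G S := [set b in G | [exists a in S, r a b]].

Definition hall_condition F G := forall S, S \subset F -> #|S| <= #|nbh G S|.

Definition matching F G (phi : A -> B) :=
  [/\ {in F &, injective phi}, {in F, forall a, phi a \in G}
    & {in F, forall a, r a (phi a)}].

Lemma nbhS G S1 S2 : S1 \subset S2 -> nbh G S1 \subset nbh G S2.
Proof.
move=> sS12; apply/subsetP => b; rewrite !inE => /andP[-> /existsP[a /andP[aS rab]]].
by apply/existsP; exists a; rewrite (subsetP sS12) ?rab.
Qed.

Lemma nbh_sub G S : nbh G S \subset G.
Proof. by apply/subsetP => b; rewrite inE => /andP[]. Qed.

Lemma hall_conditionS F1 F2 G : F1 \subset F2 -> hall_condition F2 G -> hall_condition F1 G.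
Proof. by move=> sF12 hF S sSF1; apply/hF/(subset_trans sSF1). Qed.

Lemma matching_set1 a b G : b \in G -> r a b -> matching [set a] G (fun=> b).
Proof.
by move=> bG rab; split=> [x y /set1P-> /set1P->|x|x /set1P->].
Qed.

Lemma matching_glue F S G G1 phi1 phi2 :
    S \subset F -> G1 \subset G -> matching S G1 phi1 -> matching (F :\: S) (G :\: G1) phi2 ->
  matching F G (fun a => if a \in S then phi1 a else phi2 a).
Proof.
move=> sSF sG1G [inj1 inG1 rel1] [inj2 inG2 rel2].
have inD2 a : a \in F -> a \notin S -> phi2 a \in G :\: G1.
  by move=> aF aS; apply: inG2; rewrite inE aS.
split=> [x y xF yF|a aF|a aF].
- case: ifPn => xS; case: ifPn => yS.
  + exact: inj1.
  + by move=> exy; have /setDP[_] := inD2 y yF yS; rewrite -exy inG1.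
  + by move=> exy; have /setDP[_] := inD2 x xF xS; rewrite exy inG1.
  + by apply: inj2; rewrite inE ?xS ?yS.
- by case: ifPn => aS; [apply/(subsetP sG1G)/inG1 | case/setDP: (inD2 a aF aS)].
- by case: ifPn => aS; [apply: rel1 | apply: rel2; rewrite inE aS].
Qed.

Lemma hall_condition_nbh F G : hall_condition F G -> hall_condition F (nbh G F).
Proof.
move=> hF S sSF; suff -> : nbh (nbh G F) S = nbh G S by apply: hF.
apply/setP => b; rewrite !inE -andbA; congr (_ && _).
apply/andb_idl => /existsP[a /andP[aS rab]].
by apply/existsP; exists a; rewrite (subsetP sSF) ?rab.
Qed.

(* For [T] disjoint from [S0], the Hall condition for [T :|: S0] and the
   tightness of [S0] leave at least [#|T|] neighbours of [T] outside [nbh G S0]. *)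
Lemma hall_condition_critical F G S0 :
    hall_condition F G -> S0 \subset F -> #|nbh G S0| <= #|S0| ->
  hall_condition (F :\: S0) (G :\: nbh G S0).
Proof.
move=> hF sS0F critS0 T sT.
have dT : [disjoint T & S0] by rewrite disjoints_subset (subset_trans sT) // setDE subsetIr.
have hTS0 : #|T| + #|S0| <= #|nbh G (T :|: S0)|.
  have -> : #|T| + #|S0| = #|T :|: S0| by rewrite cardsU (disjoint_setI0 dT) cards0 subn0.
  by apply: hF; rewrite subUset sS0F andbT (subset_trans sT) ?subsetDl.
have sNT : nbh G (T :|: S0) :\: nbh G S0 \subset nbh (G :\: nbh G S0) T.
  apply/subsetP => b /setDP[]; rewrite !inE => /andP[bG /existsP[a /andP[aTS0 rab]]] bN0.
  rewrite bN0 bG; apply/existsP; exists a; rewrite rab andbT.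
  case/setUP: aTS0 => // aS0; case/negP: bN0; rewrite bG.
  by apply/existsP; exists a; rewrite aS0.
have := cardsID (nbh G S0) (nbh G (T :|: S0)).
rewrite (setIidPr (nbhS G (subsetUr T S0))).
have := subset_leq_card sNT; lia.
Qed.

Lemma hall_condition_surplus F G a b :
    (forall S, S \subset F -> S != set0 -> S != F -> #|S| < #|nbh G S|) -> a \in F ->
  hall_condition (F :\ a) (G :\ b).
Proof.
move=> surplus aF T sT; have [->|T0] := eqVneq T set0; first by rewrite cards0.
have TF : T != F by apply: contraTneq sT => ->; apply/subsetPn; exists a; rewrite ?inE ?eqxx.
have {}surplus := surplus T (subset_trans sT (subsetDl _ _)) T0 TF.
have -> : nbh (G :\ b) T = nbh G T :\ b by apply/setP => c; rewrite !inE andbA.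
by move: (cardsD1 b (nbh G T)); case: (b \in nbh G T) => /=; lia.
Qed.

(* Either some nonempty proper [S0] is critical, and [S0] is matched into
   [nbh G S0] and [F :\: S0] into the rest of [G]; or every such [S] has a
   surplus neighbour, and any edge [a b] can be matched first. *)
Theorem hall_marriage (b0 : B) F G : hall_condition F G -> exists phi, matching F G phi.
Proof.
elim: {F}_.+1 {-2}F (ltnSn #|F|) G => // k IH F; rewrite ltnS => leFk G hF.
have [->|[a aF]] := set_0Vmem F; first by exists (fun=> b0); split=> x; rewrite inE.
case: (boolP [exists S : {set A}, [&& S \subset F, S != set0, S != F & #|nbh G S| <= #|S|]]).
- case/existsP => S0 /and4P[sS0F S0_0 S0F critS0].
  have ltS0F : #|S0| < #|F| by apply: proper_card; rewrite properEneq S0F.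
  have ltFS0F : #|F :\: S0| < #|F|.
    by have := cardsID S0 F; rewrite (setIidPr sS0F); have := card_gt0 S0; rewrite S0_0; lia.
  have [phi1 match1] := IH S0 (leq_trans ltS0F leFk) (nbh G S0)
    (hall_condition_nbh (hall_conditionS sS0F hF)).
  have [phi2 match2] := IH (F :\: S0) (leq_trans ltFS0F leFk) _
    (hall_condition_critical hF sS0F critS0).
  by eexists; apply: matching_glue sS0F (nbh_sub G S0) match1 match2.
- move=> /existsPn noncrit.
  have surplus S : S \subset F -> S != set0 -> S != F -> #|S| < #|nbh G S|.
    by move=> sSF S_0 SF; move: (noncrit S); rewrite sSF S_0 SF ltnNge.
  have /card_gt0P[b] : 0 < #|nbh G [set a]| by rewrite -(cards1 a) hF ?sub1set.
  rewrite inE => /andP[bG /existsP[_ /andP[/set1P-> rab]]].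
  have ltFaF : #|F :\ a| < #|F| by rewrite (cardsD1 a F) aF.
  have [phi2 match2] := IH (F :\ a) (leq_trans ltFaF leFk) _
    (hall_condition_surplus b surplus aF).
  eexists; apply: matching_glue match2; rewrite ?sub1set //.
  exact: matching_set1 (set11 b) rab.
Qed.
End Hall.

Section HarrisKleitman.
Variable T : finType.
Implicit Types (X A C : {set T}) (H D U : {set {set T}}).

Definition down_closed H := forall A C, C \in H -> A \subset C -> A \in H.

Definition up_closed H := forall A C, A \in H -> A \subset C -> C \in H.

Definition up_closed_in X H := forall A C, A \in H -> A \subset C -> C \subset X -> C \in H.

Section DeletionLink.
Variable x : T.

Definition del H := [set A in H | x \notin A].

Definition link H := [set A : {set T} | (x \notin A) && (x |: A \in H)].

Lemma card_del_link H : #|H| = #|del H| + #|link H|.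
Proof.
have -> : link H = [set A :\ x | A in [set A in H | x \in A]].
  apply/setP => A; rewrite inE; apply/andP/imsetP => [[xA AH] | [C]].
    by exists (x |: A); rewrite ?setU1K // inE AH setU11.
  by rewrite inE => /andP[CH xC] ->; rewrite !inE eqxx setD1K.
rewrite card_in_imset; last first.
  by move=> A C; rewrite !inE => /andP[_ xA] /andP[_ xC] eAC; rewrite -(setD1K xA) eAC setD1K.
rewrite -(cardsID [set A : {set T} | x \in A] H) addnC.
by congr (_ + _); apply: eq_card => A; rewrite !inE andbC.
Qed.

Lemma delI D U : del (D :&: U) = del D :&: del U.
Proof. by apply/setP => A; rewrite !inE; case: (x \in A); rewrite ?andbF ?andbT. Qed.

Lemma linkI D U : link (D :&: U) = link D :&: link U.
Proof. by apply/setP => A; rewrite !inE; case: (x \in A). Qed.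

Lemma notin_setD1 X A : A \subset X :\ x -> x \notin A.
Proof. by move=> /subsetP sAX; apply/negP => /sAX; rewrite !inE eqxx. Qed.

Lemma subsetD1 X A : x \notin A -> A \subset X -> A \subset X :\ x.
Proof. by move=> xA sAX; rewrite subsetD sAX disjoint_sym disjoints1. Qed.

Lemma del_powerset X H : H \subset powerset X -> del H \subset powerset (X :\ x).
Proof.
move=> /subsetP sHX; apply/subsetP => A; rewrite inE => /andP[/sHX].
by rewrite !powersetE => sAX xA; apply: subsetD1.
Qed.

Lemma link_powerset X H : H \subset powerset X -> link H \subset powerset (X :\ x).
Proof.
move=> /subsetP sHX; apply/subsetP => A; rewrite inE => /andP[xA /sHX].
by rewrite !powersetE subUset => /andP[_ sAX]; apply: subsetD1.
Qed.

Lemma del_down D : down_closed D -> down_closed (del D).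
Proof.
move=> dD A C; rewrite !inE => /andP[CD xC] sAC.
by rewrite (dD _ _ CD sAC) (contra (subsetP sAC x) xC).
Qed.

Lemma link_down D : down_closed D -> down_closed (link D).
Proof.
move=> dD A C; rewrite !inE => /andP[xC CD] sAC.
by rewrite (dD _ _ CD (setUS [set x] sAC)) (contra (subsetP sAC x) xC).
Qed.

Lemma del_up_in X U : up_closed_in X U -> up_closed_in (X :\ x) (del U).
Proof.
move=> uU A C; rewrite !inE => /andP[AU _] sAC sCX.
by rewrite (notin_setD1 sCX) (uU _ _ AU sAC) // (subset_trans sCX) ?subsetDl.
Qed.

Lemma link_up_in X U : x \in X -> up_closed_in X U -> up_closed_in (X :\ x) (link U).
Proof.
move=> xX uU A C; rewrite !inE => /andP[_ AU] sAC sCX.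
rewrite (notin_setD1 sCX) (uU _ _ AU (setUS [set x] sAC)) //.
by rewrite subUset sub1set xX (subset_trans sCX) ?subsetDl.
Qed.

Lemma link_sub_del D : down_closed D -> link D \subset del D.
Proof.
move=> dD; apply/subsetP => A; rewrite !inE => /andP[xA AD].
by rewrite xA (dD _ _ AD) ?subsetUr.
Qed.

Lemma del_sub_link X U :
  x \in X -> U \subset powerset X -> up_closed_in X U -> del U \subset link U.
Proof.
move=> xX /subsetP sUX uU; apply/subsetP => A; rewrite !inE => /andP[AU xA].
rewrite xA (uU _ _ AU) ?subsetUr //.
by move: (sUX A AU); rewrite powersetE subUset sub1set xX.
Qed.

End DeletionLink.

Lemma chebyshev_sum2 f0 f1 u0 u1 :
  f1 <= f0 -> u0 <= u1 -> 2 * (f0 * u0 + f1 * u1) <= (f0 + f1) * (u0 + u1).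
Proof. nia. Qed.

(* Split both families along some [x] in [X]: as [link D \subset del D] and
   [del U \subset link U], the two halves are oppositely ordered. *)
Lemma harris_kleitman_in X D U :
    D \subset powerset X -> U \subset powerset X -> down_closed D -> up_closed_in X U ->
  #|D :&: U| * 2 ^ #|X| <= #|D| * #|U|.
Proof.
elim: {X}#|X| {-2}X (erefl #|X|) D U => [|k IH] X cardX D U sDX sUX dD uU.
  rewrite cardX expn0 muln1; have := subset_leq_card (subsetIl D U).
  have := subset_leq_card (subsetIr D U); nia.
have [x xX] : exists x, x \in X by apply/set0Pn; rewrite -card_gt0 cardX.
have cardX' : #|X :\ x| = k by move: (cardsD1 x X); rewrite xX cardX => -[].
have hk0 := IH _ cardX' (del x D) (del x U) (del_powerset x sDX) (del_powerset x sUX)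
  (del_down dD) (del_up_in uU).
have hk1 := IH _ cardX' (link x D) (link x U) (link_powerset x sDX) (link_powerset x sUX)
  (link_down dD) (link_up_in xX uU).
rewrite cardX' in hk0 hk1.
rewrite (card_del_link x (D :&: U)) (card_del_link x D) (card_del_link x U).
apply: (leq_trans _ (chebyshev_sum2 (subset_leq_card (link_sub_del x dD))
  (subset_leq_card (del_sub_link xX sUX uU)))).
rewrite delI linkI cardX expnS mulnCA mulnDl leq_mul2l.
exact: leq_add.
Qed.

Lemma harris_kleitman D U :
  down_closed D -> up_closed U -> #|D :&: U| * 2 ^ #|T| <= #|D| * #|U|.
Proof.
move=> dD uU; rewrite -cardsT; apply: harris_kleitman_in => //; rewrite ?powersetT ?subsetT //.
by move=> A C AU sAC _; apply: uU AU sAC.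
Qed.

Lemma harris_kleitman_down D D' :
  down_closed D -> down_closed D' -> #|D| * #|D'| <= #|D :&: D'| * 2 ^ #|T|.
Proof.
move=> dD dD'.
have uD'C : up_closed (~: D').
  by move=> A C; rewrite !inE => AD' sAC; apply: contra AD' => CD'; apply: dD' CD' sAC.
have := harris_kleitman dD uD'C.
have := cardsID D' D; rewrite setDE.
have : #|D'| + #|~: D'| = 2 ^ #|T| by rewrite cardsC -cardsT -powersetT card_powerset cardsT.
nia.
Qed.

End HarrisKleitman.

Section KneserMatching.
Variable T : finType.
Implicit Types (S F G : {set {set T}}).

Definition up_closure S := [set C : {set T} | [exists A in S, A \subset C]].

Definition disjoint_from S := [set C : {set T} | [exists A in S, [disjoint A & C]]].

Lemma subset_up_closure S : S \subset up_closure S.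
Proof. by apply/subsetP => A AS; rewrite inE; apply/existsP; exists A; rewrite AS subxx. Qed.

Lemma up_closure_closed S : up_closed (up_closure S).
Proof.
move=> A C; rewrite !inE => /existsP[B /andP[BS sBA]] sAC.
by apply/existsP; exists B; rewrite BS (subset_trans sBA sAC).
Qed.

Lemma disjoint_from_closed S : down_closed (disjoint_from S).
Proof.
move=> A C; rewrite !inE => /existsP[B /andP[BS dBC]] sAC.
by apply/existsP; exists B; rewrite BS (disjointWr sAC dBC).
Qed.

Lemma card_disjoint_from S : #|disjoint_from S| = #|up_closure S|.
Proof.
rewrite -(card_imset _ (@setC_inj T)); apply: eq_card => C.
rewrite -[C in LHS]setCK (mem_imset _ _ (@setC_inj T)) !inE.
by apply: eq_existsb => A; rewrite disjoints_subset setCK.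
Qed.

Lemma kneser_hall_condition F G :
    down_closed F -> down_closed G -> #|F| <= #|G| ->
  hall_condition (fun A C : {set T} => [disjoint A & C]) F G.
Proof.
move=> dF dG leFG S sSF.
have -> : nbh (fun A C : {set T} => [disjoint A & C]) G S = G :&: disjoint_from S.
  by apply/setP => C; rewrite !inE.
rewrite -(@leq_pmul2r (2 ^ #|T|)) ?expn_gt0 //.
apply: (leq_trans _ (harris_kleitman_down dG (@disjoint_from_closed S))).
rewrite card_disjoint_from; apply: (leq_trans _ (leq_mul leFG (leqnn _))).
apply: (leq_trans _ (harris_kleitman dF (@up_closure_closed S))).
by rewrite leq_mul2r subset_leq_card ?orbT // subsetI sSF subset_up_closure.
Qed.

End KneserMatching.

Theorem theorem1p5 (n : nat) (F G : {set {set 'I_n}}) :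
  1 <= n -> down_set F -> down_set G -> #|F| <= #|G| ->
  exists phi : {set 'I_n} -> {set 'I_n},
    {in F &, injective phi} /\
    (forall A, A \in F -> phi A \in G) /\
    (forall A, A \in F -> [disjoint A & phi A]).
Proof.
move=> _ dF dG leFG.
have [phi [inj inG disj]] := hall_marriage set0 (kneser_hall_condition dF dG leFG).
by exists phi.
Qed.
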